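(* Let two algebraically equivalent models (each one of the linear dynamic models described in the context) be written in stacked form as $$T_1x=v,\qquad T_2y=w,$$ where $x,y$ are zero-mean nonsingular Gaussian sequences over $[0,N]$, the nonsingular matrices $T_1,T_2$ are determined by the model parameters, and $v=[v_0',\ldots,v_N']'$, $w=[w_0',\ldots,w_N']'$ are the vectors of dynamic noise and boundary values with nonsingular covariances $\mathrm{Cov}(v)=P_1$, $\mathrm{Cov}(w)=P_2$. Then the sample paths of $v$ and $w$ are related by $$T_2'P_2^{-1}w=T_1'P_1^{-1}v .$$
   Context: Sequences are indexed by $[0,N]=(0,1,\ldots,N)$, $x_k\in\mathbb{R}^d$, $'$ denotes transpose. The models considered are linear dynamic models of the following types: forward/backward Markov, reciprocal, and forward/backward $CM_L$ and $CM_F$ models; each such model with its boundary condition can be written as $Tx=v$ with $T$ nonsingular and $v$ stacking the zero-mean Gaussian dynamic noise and boundary values. Two models $T_1x=v$, $T_2y=w$ are algebraically equivalent (AE) if $x=y$ (path-wise identical sequences). *)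

From HB Require Import structures.
From mathcomp Require Import all_boot all_order all_algebra.
From mathcomp Require Import all_classical all_reals all_analysis.
Set Implicit Arguments. Unset Strict Implicit. Unset Printing Implicit Defensive.
Import Order.TTheory GRing.Theory Num.Theory.
Local Open Scope classical_set_scope.
Local Open Scope ring_scope.

(* Zero-mean nonsingular Gaussian random vector X : T -> 'cV_n
   (Cramer-Wold characterisation): every nonzero linear combination u'X is a
   measurable real random variable whose law is the centred normal law
   N(0, s^2) with s > 0 (s > 0 for every u <> 0 = nonsingular covariance). *)
Definition zm_nonsing_gaussian {d} {T : measurableType d} {R : realType}
  (P : probability T R) (n : nat) (X : T -> 'cV[R]_n) : Prop :=
  forall u : 'cV[R]_n, u != 0 ->
    measurable_fun setT (fun w => (u^T *m X w) 0 0) /\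
    exists s : R, 0 < s /\
      forall A : set R, measurable A ->
        P ((fun w => (u^T *m X w) 0 0) @^-1` A) = normal_prob 0 s A.

Definition cov_mx {d} {T : measurableType d} {R : realType}
  (P : probability T R) (n : nat) (X : T -> 'cV[R]_n) : 'M[R]_n :=
  \matrix_(i, j) fine (covariance P (fun w => X w i 0) (fun w => X w j 0)).

From HB Require Import structures.
From mathcomp Require Import all_boot all_order all_algebra.
From mathcomp Require Import all_classical all_reals all_analysis.
From mathcomp Require Import ring measurable_realfun.
Import Order.TTheory GRing.Theory Num.Theory.
Local Open Scope classical_set_scope.
Local Open Scope ring_scope.

(* Since x = y path-wise, v = T1 x and w = T2 x.  The coordinates of a
   nonsingular Gaussian vector are centred normal, hence square integrable, so
   covariance is bilinear on them and Cov(T x) = T Cov(x) T'.  Both sides then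
   equal Cov(x)^-1 x, because T' (T C T')^-1 T = C^-1 for invertible T. *)

Section normal_second_moment.
Context {R : realType}.
Local Notation mu := (@lebesgue_measure R).

Lemma integral_normal_prob (m s : R) (f : R -> \bar R) :
  (forall x, (0 <= f x)%E) -> measurable_fun setT f ->
  (\int[normal_prob m s]_x f x = \int[mu]_x (f x * (normal_pdf m s x)%:E))%E.
Proof.
move=> f0 mf; have ac := normal_prob_dominates m s.
rewrite -(Radon_Nikodym_SigmaFinite.change_of_variables ac) //.
have pdfE : ae_eq mu setT (Radon_Nikodym_SigmaFinite.f (normal_prob m s) mu)
    (fun x => (normal_pdf m s x)%:E).
  apply: integral_ae_eq => //.
  - exact: Radon_Nikodym_SigmaFinite.f_integrable.
  - by apply/measurable_EFinP; exact: measurable_normal_pdf.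
  - by move=> A _ mA; rewrite -Radon_Nikodym_SigmaFinite.f_integral.
apply: ae_eq_integral => //.
- apply: emeasurable_funM => //.
  exact: measurable_int (Radon_Nikodym_SigmaFinite.f_integrable ac).
- apply: emeasurable_funM => //.
  by apply/measurable_EFinP; exact: measurable_normal_pdf.
- exact: ae_eqe_mul2l.
Qed.

Lemma normal_fun_sqr_le (s x : R) : s != 0 ->
  x ^+ 2 * normal_fun 0 s x <= s ^+ 2 *+ 4 * normal_fun 0 (s * Num.sqrt 2) x.
Proof.
move=> s0; rewrite /normal_fun !subr0.
have s2_neq0 : s ^+ 2 != 0 by rewrite expf_neq0.
set u := x ^+ 2 / (s ^+ 2 *+ 4).
have u_ge0 : 0 <= u by rewrite divr_ge0 ?mulrn_wge0 ?sqr_ge0.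
have -> : (s * Num.sqrt 2) ^+ 2 *+ 2 = s ^+ 2 *+ 4.
  by rewrite exprMn sqr_sqrtr //; ring.
have -> : - x ^+ 2 / (s ^+ 2 *+ 4) = - u by rewrite mulNr.
have -> : - x ^+ 2 / (s ^+ 2 *+ 2) = - u + - u by rewrite /u; field.
have -> : x ^+ 2 = s ^+ 2 *+ 4 * u by rewrite /u; field.
rewrite expRD -mulrA ler_wpM2l ?mulrn_wge0 ?sqr_ge0 //.
rewrite mulrA ler_piMl ?expR_ge0 // expRN mulrC ler_pdivrMl ?expR_gt0 // mulr1.
by rewrite (le_trans _ (expR_ge1Dx u)) // lerDr.
Qed.

Lemma normal_prob_sqr_lty (s : R) : s != 0 ->
  (\int[normal_prob 0 s]_x (x ^+ 2)%:E < +oo)%E.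
Proof.
move=> s0; set s' := s * Num.sqrt 2.
have s'_neq0 : s' != 0 by rewrite mulf_neq0 // sqrtr_eq0 -ltNge.
have msqr : measurable_fun setT (fun x : R => x ^+ 2) by exact: measurable_funX.
rewrite integral_normal_prob //; last first.
- exact/measurable_EFinP.
- by move=> x; rewrite lee_fin sqr_ge0.
set K := normal_peak s / normal_peak s' * s ^+ 2 *+ 4.
have K_ge0 : 0 <= K.
  by rewrite /K mulrn_wge0 // mulr_ge0 ?sqr_ge0 // divr_ge0 ?normal_peak_ge0.
have sqr_pdf_le x : x ^+ 2 * normal_pdf 0 s x <= K * normal_pdf 0 s' x.
  have peak'_neq0 : normal_peak s' != 0 by rewrite gt_eqF ?normal_peak_gt0.
  rewrite /normal_pdf (negbTE s0) (negbTE s'_neq0) /K.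
  rewrite [X in _ <= X](_ : _ = normal_peak s *
      (s ^+ 2 *+ 4 * normal_fun 0 s' x)); last by field.
  by rewrite mulrCA ler_wpM2l ?normal_peak_ge0 ?normal_fun_sqr_le.
apply: (@le_lt_trans _ _ (\int[mu]_x (K%:E * (normal_pdf 0 s' x)%:E))%E).
  apply: ge0_le_integral => //.
  - by move=> x _; rewrite -EFinM lee_fin mulr_ge0 ?sqr_ge0 ?normal_pdf_ge0.
  - apply/measurable_EFinP; apply: measurable_funM => //.
    exact: measurable_normal_pdf.
  - apply/measurable_EFinP; apply: measurable_funM => //.
    exact: measurable_normal_pdf.
  - by move=> x _; rewrite -!EFinM lee_fin sqr_pdf_le.
rewrite (integralZl measurableT (integrable_normal_pdf 0 s')).
by rewrite integral_normal_pdf mule1 ltry.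
Qed.

End normal_second_moment.

Section covariance_linear.
Context {d} {T : measurableType d} {R : realType} (P : probability T R).

(* Required to find the submodule structure of [Lfun P 2%:E]. *)
Let one_le_two : (1 <= 2%:E :> \bar R)%E. Proof. by rewrite lee1n. Qed.

Lemma Lfun2_lincomb (I : Type) (r : seq I) (a : I -> R) (X : I -> T -> R) :
  (forall k, X k \in Lfun P 2%:E) ->
  \sum_(k <- r) a k *: X k \in Lfun P 2%:E.
Proof.
by move=> X2; apply: rpred_sum => k _; apply: rpredZ; last exact: X2.
Qed.

Lemma covariance_lincomb_l (I : Type) (r : seq I) (a : I -> R)
    (X : I -> T -> R) (Z : T -> R) :
  (forall k, X k \in Lfun P 2%:E) -> Z \in Lfun P 2%:E ->
  covariance P (\sum_(k <- r) a k *: X k) Z =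
  (\sum_(k <- r) a k * fine (covariance P (X k) Z))%:E.
Proof.
move=> X2 Z2.
have Pfin : P setT \is a fin_num := fin_num_measure P _ measurableT.
have Z1 := Lfun_subset12 Pfin Z2.
elim: r => [|k r IH]; first by rewrite !big_nil covariance_cst_l.
rewrite !big_cons covarianceDl ?Lfun2_lincomb ?rpredZ //.
have X1 := Lfun_subset12 Pfin (X2 k).
have XZ := Lfun2_mul_Lfun1 (X2 k) Z2.
rewrite IH EFinD; congr (_ + _)%E.
have -> : a k *: X k = (a k \o* X k)%R by apply/funext => t /=; rewrite mulrC.
rewrite covarianceZl //.
by rewrite EFinM fineK // covariance_fin_num.
Qed.

Lemma coord_mulmx_lincomb n (A : 'M[R]_n) (x : T -> 'cV[R]_n) i :
  (fun om => (A *m x om) i 0) = \sum_k A i k *: (fun om => x om k 0).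
Proof. by apply/funext => om; rewrite mxE fct_sumE; apply: eq_bigr => k _. Qed.

Lemma cov_mx_mulmx n (A : 'M[R]_n) (x : T -> 'cV[R]_n) :
  (forall i, (fun om => x om i 0) \in Lfun P 2%:E) ->
  cov_mx P (fun om => A *m x om) = A *m cov_mx P x *m A^T.
Proof.
move=> x2; apply/matrixP => i j; rewrite !mxE !coord_mulmx_lincomb.
rewrite covariance_lincomb_l ?Lfun2_lincomb //=.
under [RHS]eq_bigr do rewrite !mxE big_distrl /=.
rewrite exchange_big /=; apply: eq_bigr => k _.
rewrite covarianceC covariance_lincomb_l //= big_distrr /=.
by apply: eq_bigr => l _; rewrite !mxE covarianceC [A j l * _]mulrC mulrA.
Qed.
End covariance_linear.

Lemma normal_law_Lfun2 {d} {T : measurableType d} {R : realType}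
    {P : probability T R} {X : T -> R} {s : R} :
  measurable_fun setT X -> s != 0 ->
  (forall A : set R, measurable A -> P (X @^-1` A) = normal_prob 0 s A) ->
  X \in Lfun P 2%:E.
Proof.
move=> mX s0 lawX; rewrite inE; apply/andP; split; first by rewrite inE.
rewrite inE /= /finite_norm unlock /Lnorm; apply: poweR_lty.
have sqr_absE t : (`|(EFin \o X) t| `^ 2 = (X t ^+ 2)%:E)%E.
  by rewrite /= powR_mulrn ?normr_ge0 // real_normK ?num_real.
under eq_integral => t _ do rewrite sqr_absE.
(* [normal_prob] is a measure on [measurableTypeR R], the Borel sets of [R]. *)
have mX' : measurable_fun setT (X : T -> measurableTypeR R) by [].
have := ge0_integral_pushforward mX' P (D := setT) (f := fun y => (y ^+ 2)%:E).
rewrite preimage_setT => <- //; last first.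
- by move=> y _; rewrite lee_fin sqr_ge0.
- by apply/measurable_EFinP; exact: measurable_funX.
rewrite (eq_measure_integral (normal_prob 0 s)).
  exact: normal_prob_sqr_lty.
by move=> A mA _; exact: lawX.
Qed.

Lemma zm_nonsing_gaussian_Lfun2 {d} {T : measurableType d} {R : realType}
    {P : probability T R} {n} {x : T -> 'cV[R]_n} :
  zm_nonsing_gaussian P x -> forall i, (fun om => x om i 0) \in Lfun P 2%:E.
Proof.
move=> gx i.
have e_i_neq0 : delta_mx i 0 != 0 :> 'cV[R]_n.
  by apply/eqP => /matrixP /(_ i 0) /eqP; rewrite !mxE !eqxx oner_eq0.
have [mxi [s [s_gt0 lawxi]]] := gx _ e_i_neq0.
have coordE : (fun om => ((delta_mx i 0 : 'cV[R]_n)^T *m x om) 0 0) =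
    (fun om => x om i 0).
  by apply: funext => om; rewrite trmx_delta -rowE mxE.
rewrite coordE in mxi lawxi.
exact: normal_law_Lfun2 mxi (lt0r_neq0 s_gt0) lawxi.
Qed.

Lemma trmx_invmx_congruence (R : comUnitRingType) n (M C : 'M[R]_n) :
  M \in unitmx -> M *m C *m M^T \in unitmx ->
  M^T *m invmx (M *m C *m M^T) *m M = invmx C.
Proof.
move=> uM uMCM.
have uC : C \in unitmx by move: uMCM; rewrite !unitmx_mul => /andP[/andP[]].
have uMt : M^T \in unitmx by rewrite unitmx_tr.
set Q := M *m C *m M^T in uMCM *.
have MC_Q : M *m C = Q *m invmx M^T by rewrite /Q mulmxK.
apply: (can_inj (mulmxK uC)); rewrite /= mulVmx // -[_ *m C]mulmxA MC_Q.
by rewrite mulmxA mulmxKV // mulmxV.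
Qed.

Theorem proposition3 (dT : measure_display) (T : measurableType dT)
  (R : realType) (P : probability T R) (d N : nat)
  (x y v w : T -> 'cV[R]_(N.+1 * d))
  (T1 T2 P1 P2 : 'M[R]_(N.+1 * d)) :
  zm_nonsing_gaussian P x -> zm_nonsing_gaussian P y ->
  T1 \in unitmx -> T2 \in unitmx ->
  (forall om, T1 *m x om = v om) ->
  (forall om, T2 *m y om = w om) ->
  P1 = cov_mx P v -> P2 = cov_mx P w ->
  P1 \in unitmx -> P2 \in unitmx ->
  (* algebraic equivalence: the two models generate path-wise identical sequences *)
  (forall om, x om = y om) ->
  forall om, T2^T *m invmx P2 *m w om = T1^T *m invmx P1 *m v om.
Proof.
move=> gx _ uT1 uT2 vE wE -> -> uP1 uP2 xy om.
have vxE : v = fun om => T1 *m x om by apply: funext => om'; rewrite vE.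
have wxE : w = fun om => T2 *m x om by apply: funext => om'; rewrite xy wE.
have x2 := zm_nonsing_gaussian_Lfun2 gx.
rewrite vxE wxE !cov_mx_mulmx // in uP1 uP2 *.
by rewrite !mulmxA !trmx_invmx_congruence.
Qed.
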